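(* For all integers $k,n\ge 1$, \begin{align*} \zeta^*(k+1,\underbrace{1,\dots,1}_{n})&=\sum_{t=1}^{n+1}\ \sum_{\substack{a_1+\dots+a_k=n+1-t\\ a_i\ge 0}}\zeta(a_k+t+1,\,a_1+1,\,a_2+1,\dots,a_{k-1}+1)\\ &=\sum_{\substack{a_1+\dots+a_k=n\\ a_i\ge 0}}(a_k+1)\,\zeta(a_k+2,\,a_1+1,\,a_2+1,\dots,a_{k-1}+1). \end{align*}
   Context: For positive integers $k_1,\dots,k_n$ with $k_1\ge 2$, $\zeta(k_1,\dots,k_n)=\sum_{m_1>\dots>m_n\ge 1}\prod_i m_i^{-k_i}$ and $\zeta^*(k_1,\dots,k_n)=\sum_{m_1\ge\dots\ge m_n\ge 1}\prod_i m_i^{-k_i}$. $\underbrace{1,\dots,1}_{n}$ denotes $n$ entries equal to $1$. For $k=1$ the arguments after the first entry are absent. *)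

From Stdlib Require Import Reals List Arith.
From Coquelicot Require Import Coquelicot.
Import ListNotations.
Open Scope R_scope.

Definition lsum {A : Type} (f : A -> R) (l : list A) : R :=
  fold_right Rplus 0 (map f l).

(* Truncated multiple zeta sum:
   mzv_trunc N [k1;...;kn] = sum_{N >= m1 > m2 > ... > mn >= 1} prod m_i^{-k_i}. *)
Fixpoint mzv_trunc (N : nat) (ks : list nat) : R :=
  match ks with
  | [] => 1
  | k :: ks' =>
      lsum (fun m => / (INR m ^ k) * mzv_trunc (m - 1) ks') (seq 1 N)
  end.

(* Truncated multiple zeta-star sum:
   mzsv_trunc N [k1;...;kn] = sum_{N >= m1 >= m2 >= ... >= mn >= 1} prod m_i^{-k_i}. *)
Fixpoint mzsv_trunc (N : nat) (ks : list nat) : R :=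
  match ks with
  | [] => 1
  | k :: ks' =>
      lsum (fun m => / (INR m ^ k) * mzsv_trunc m ks') (seq 1 N)
  end.

(* zeta(k1,...,kn) and zeta*(k1,...,kn) as limits of the (nondecreasing)
   truncated sums; these are the values of the infinite series of nonnegative terms. *)
Definition mzv (ks : list nat) : R := real (Lim_seq (fun N => mzv_trunc N ks)).
Definition mzsv (ks : list nat) : R := real (Lim_seq (fun N => mzsv_trunc N ks)).

Fixpoint weak_comps (k m : nat) : list (list nat) :=
  match k with
  | O => if Nat.eqb m 0 then [[]] else []
  | S k' => flat_map (fun a => map (cons a) (weak_comps k' (m - a))) (seq 0 (S m))
  end.

(* For a = [a_1;...;a_k]: a_k is [last a 0], and [map S (removelast a)]
   is [a_1+1; ...; a_{k-1}+1]. *)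

(* Work with power series in [x]. The coefficient of [x^n] in [prod_(i<=m) i / (i - x)] is
   [zeta*({1}^n)] truncated at [m], and the right-hand side weighted by [a_k + 1] is the
   coefficient of [x^n] in the sum over [0 < l_1 < ... < l_k] of
   [1 / ((l_1 - x) ... (l_(k-1) - x) (l_k - x)^2)]. The shifted products
   [F_(m,l) = prod_(i<=m) i / (l + i - x)] satisfy two partial fraction identities,
     [m F_(m,l+1) / (l + 1 - x) = F_(m,l) - F_(m,l+1)] and
     [F_(m+1,l) / (m + 1) = (F_(m,l) - F_(m+1,l)) / (l - x)].
   Telescoping the first in [l] trades a factor [1/m] for one more nested variable; after
   [k] steps, telescoping the second in [m] leaves the double-pole sum. With all sums
   truncated at [N] this is exact up to remainders built from [F_(m,N)] and [F_(N,l)], whose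
   coefficients are [O((log N)^(k+n) / N)]; letting [N] tend to infinity gives the second
   equality, and the first is a reindexing of it. *)

From Stdlib Require Import Reals List Arith Lra Lia FunctionalExtensionality.
From Coquelicot Require Import Coquelicot.
Import ListNotations.
Open Scope R_scope.

(** * Finite sums *)

Lemma lsum_nil {A} (f : A -> R) : lsum f [] = 0.
Proof. reflexivity. Qed.

Lemma lsum_cons {A} (f : A -> R) x l : lsum f (x :: l) = f x + lsum f l.
Proof. reflexivity. Qed.

Lemma lsum_app {A} (f : A -> R) l1 l2 : lsum f (l1 ++ l2) = lsum f l1 + lsum f l2.
Proof.
  induction l1 as [|x l1 IH]; cbn [app]; rewrite ?lsum_cons, ?IH, ?lsum_nil; lra.
Qed.

Lemma lsum_ext_in {A} (f g : A -> R) l :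
  (forall x, In x l -> f x = g x) -> lsum f l = lsum g l.
Proof.
  induction l as [|x l IH]; intros H; [reflexivity|].
  rewrite !lsum_cons, H, IH; [reflexivity| |left; reflexivity].
  intros y Hy; apply H; right; assumption.
Qed.

Lemma lsum_add {A} (f g : A -> R) l : lsum (fun x => f x + g x) l = lsum f l + lsum g l.
Proof. induction l as [|x l IH]; rewrite ?lsum_cons, ?IH, ?lsum_nil; lra. Qed.

Lemma lsum_sub {A} (f g : A -> R) l : lsum (fun x => f x - g x) l = lsum f l - lsum g l.
Proof. induction l as [|x l IH]; rewrite ?lsum_cons, ?IH, ?lsum_nil; lra. Qed.

Lemma lsum_scal_l {A} c (f : A -> R) l : lsum (fun x => c * f x) l = c * lsum f l.
Proof. induction l as [|x l IH]; rewrite ?lsum_cons, ?IH, ?lsum_nil; lra. Qed.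

Lemma lsum_scal_r {A} c (f : A -> R) l : lsum (fun x => f x * c) l = lsum f l * c.
Proof. induction l as [|x l IH]; rewrite ?lsum_cons, ?IH, ?lsum_nil; lra. Qed.

Lemma lsum_const {A} c (l : list A) : lsum (fun _ => c) l = INR (length l) * c.
Proof.
  induction l as [|x l IH]; rewrite ?lsum_cons, ?IH, ?lsum_nil; cbn [length];
    rewrite ?S_INR; simpl; lra.
Qed.

Lemma lsum_nonneg {A} (f : A -> R) l : (forall x, In x l -> 0 <= f x) -> 0 <= lsum f l.
Proof.
  induction l as [|x l IH]; intros H; rewrite ?lsum_cons, ?lsum_nil; [lra|].
  assert (0 <= f x) by (apply H; left; reflexivity).
  assert (0 <= lsum f l) by (apply IH; intros; apply H; right; assumption).
  lra.
Qed.

Lemma lsum_le {A} (f g : A -> R) l :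
  (forall x, In x l -> f x <= g x) -> lsum f l <= lsum g l.
Proof.
  induction l as [|x l IH]; intros H; rewrite ?lsum_cons, ?lsum_nil; [lra|].
  assert (f x <= g x) by (apply H; left; reflexivity).
  assert (lsum f l <= lsum g l) by (apply IH; intros; apply H; right; assumption).
  lra.
Qed.

Lemma lsum_ge_term {A} (f : A -> R) l x :
  (forall y, In y l -> 0 <= f y) -> In x l -> f x <= lsum f l.
Proof.
  induction l as [|y l IH]; intros H Hx; [destruct Hx|]. rewrite lsum_cons.
  assert (0 <= f y) by (apply H; left; reflexivity).
  assert (Hl : forall z, In z l -> 0 <= f z) by (intros; apply H; right; assumption).
  destruct Hx as [<-|Hx].
  - assert (0 <= lsum f l) by (apply lsum_nonneg, Hl). lra.
  - assert (f x <= lsum f l) by (apply IH; assumption). lra.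
Qed.

Lemma lsum_map {A B} (f : B -> R) (g : A -> B) l : lsum f (map g l) = lsum (fun x => f (g x)) l.
Proof. induction l as [|x l IH]; cbn [map]; rewrite ?lsum_cons, ?IH; reflexivity. Qed.

Lemma lsum_flat_map {A B} (f : B -> R) (g : A -> list B) l :
  lsum f (flat_map g l) = lsum (fun x => lsum f (g x)) l.
Proof. induction l as [|x l IH]; cbn [flat_map]; rewrite ?lsum_app, ?lsum_cons, ?IH; reflexivity. Qed.

Lemma lsum_comm {A B} (F : A -> B -> R) l1 l2 :
  lsum (fun x => lsum (fun y => F x y) l2) l1 = lsum (fun y => lsum (fun x => F x y) l1) l2.
Proof.
  induction l1 as [|x l1 IH].
  - rewrite lsum_nil. symmetry.
    induction l2 as [|y l2 IH2]; [reflexivity|]. rewrite lsum_cons, IH2, lsum_nil. lra.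
  - rewrite lsum_cons, IH, <- lsum_add. apply lsum_ext_in. intros y _. reflexivity.
Qed.

Lemma lsum_seq_snoc (f : nat -> R) a n : lsum f (seq a (S n)) = lsum f (seq a n) + f (a + n)%nat.
Proof. rewrite seq_S, lsum_app, lsum_cons, lsum_nil. lra. Qed.

Lemma lsum_seq_shift (f : nat -> R) a n : lsum f (seq (S a) n) = lsum (fun i => f (S i)) (seq a n).
Proof. rewrite <- seq_shift, lsum_map. reflexivity. Qed.

Lemma lsum_telescope (g : nat -> R) l n :
  lsum (fun i => g (i - 1)%nat - g i) (seq (S l) n) = g l - g (l + n)%nat.
Proof.
  induction n as [|n IH]; [rewrite Nat.add_0_r; cbn; lra|].
  rewrite lsum_seq_snoc, IH. replace (S l + n - 1)%nat with (l + n)%nat by lia.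
  replace (S l + n)%nat with (l + S n)%nat by lia. lra.
Qed.

Lemma lsum_seq_reflect (h : nat -> R) M :
  lsum h (seq 0 (S M)) = lsum (fun a => h (M - a)%nat) (seq 0 (S M)).
Proof.
  revert h. induction M as [|M IH]; intros h; [reflexivity|].
  change (seq 0 (S (S M))) with (0%nat :: seq 1 (S M)) at 1.
  rewrite lsum_cons, lsum_seq_shift, (IH (fun i => h (S i))).
  rewrite (lsum_seq_snoc (fun a => h (S M - a)%nat) 0 (S M)), Nat.add_0_l, Nat.sub_diag.
  rewrite Rplus_comm.
  f_equal. apply lsum_ext_in. intros x Hx. apply in_seq in Hx. f_equal. lia.
Qed.

Lemma lsum_triangle_S (G : nat -> nat -> R) n :
  lsum (fun a => lsum (fun c => G a c) (seq 0 (S (S n - a)))) (seq 0 (S (S n))) =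
  lsum (fun a => lsum (fun c => G a c) (seq 0 (S (n - a)))) (seq 0 (S n)) +
  lsum (fun a => G a (S n - a)%nat) (seq 0 (S (S n))).
Proof.
  rewrite (lsum_seq_snoc _ 0 (S n)), (lsum_seq_snoc (fun a => G a (S n - a)%nat) 0 (S n)).
  rewrite Nat.add_0_l, Nat.sub_diag. change (seq 0 1) with [0%nat]. rewrite lsum_cons, lsum_nil.
  enough (E : lsum (fun a => lsum (fun c => G a c) (seq 0 (S (S n - a)))) (seq 0 (S n)) =
              lsum (fun a => lsum (fun c => G a c) (seq 0 (S (n - a)))) (seq 0 (S n)) +
              lsum (fun a => G a (S n - a)%nat) (seq 0 (S n))) by (rewrite E; lra).
  rewrite <- lsum_add. apply lsum_ext_in. intros a Ha. apply in_seq in Ha.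
  replace (S n - a)%nat with (S (n - a)) by lia. rewrite lsum_seq_snoc. reflexivity.
Qed.

Lemma lsum_triangle (G : nat -> nat -> R) n :
  lsum (fun a => lsum (fun c => G a c) (seq 0 (S (n - a)))) (seq 0 (S n)) =
  lsum (fun c => lsum (fun a => G a c) (seq 0 (S (n - c)))) (seq 0 (S n)).
Proof.
  induction n as [|n IH]; [reflexivity|].
  rewrite lsum_triangle_S, (lsum_triangle_S (fun c a => G a c)), IH. f_equal.
  rewrite lsum_seq_reflect. apply lsum_ext_in. intros a Ha. apply in_seq in Ha. f_equal. lia.
Qed.

Lemma lsum_strict_triangle (G : nat -> nat -> R) U l0 :
  lsum (fun l => lsum (fun p => G l p) (seq (S l) (U - l))) (seq (S l0) (U - l0)) =
  lsum (fun p => lsum (fun l => G l p) (seq (S l0) (p - 1 - l0))) (seq (S l0) (U - l0)).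
Proof.
  induction U as [|U IH]; [reflexivity|].
  destruct (le_lt_dec l0 U) as [Hle|Hlt];
    [|replace (S U - l0)%nat with 0%nat by lia; reflexivity].
  replace (S U - l0)%nat with (S (U - l0)) by lia.
  rewrite !lsum_seq_snoc. replace (S l0 + (U - l0))%nat with (S U) by lia.
  rewrite Nat.sub_diag. change (seq (S (S U)) 0) with (@nil nat). rewrite lsum_nil. replace (S U - 1 - l0)%nat with (U - l0)%nat by lia.
  rewrite (lsum_ext_in (fun l => lsum (fun p => G l p) (seq (S l) (S U - l)))
             (fun l => lsum (fun p => G l p) (seq (S l) (U - l)) + G l (S U))).
  - rewrite lsum_add, IH. ring.
  - intros x Hx. apply in_seq in Hx. replace (S U - x)%nat with (S (U - x)) by lia.
    rewrite lsum_seq_snoc. do 2 f_equal. lia.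
Qed.

Lemma lsum_tails (G : nat -> R) n :
  lsum (fun t => lsum (fun c => G (c + t)%nat) (seq 0 (S (n - t)))) (seq 0 (S n)) =
  lsum (fun d => INR (S d) * G d) (seq 0 (S n)).
Proof.
  induction n as [|n IH]; [cbn; lra|].
  rewrite !(lsum_seq_snoc _ 0 (S n)), Nat.add_0_l, Nat.sub_diag.
  rewrite (lsum_ext_in _ (fun t => lsum (fun c => G (c + t)%nat) (seq 0 (S (n - t))) + G (S n))).
  - rewrite lsum_add, IH, lsum_const, length_seq. cbn -[INR]. rewrite (S_INR (S n)). ring.
  - intros t Ht. apply in_seq in Ht. replace (S n - t)%nat with (S (n - t)) by lia.
    rewrite lsum_seq_snoc. do 2 f_equal. lia.
Qed.

Lemma is_lim_seq_lsum {A} (l : list A) (g : A -> nat -> R) (lim : A -> R) :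
  (forall a, In a l -> is_lim_seq (g a) (lim a)) ->
  is_lim_seq (fun N => lsum (fun a => g a N) l) (lsum lim l).
Proof.
  induction l as [|x l IH]; intros Hl.
  - apply is_lim_seq_const.
  - apply (is_lim_seq_plus' (g x) (fun N => lsum (fun a => g a N) l)).
    + apply Hl; left; reflexivity.
    + apply IH; intros; apply Hl; right; assumption.
Qed.

(** * Power series *)

(* A formal power series in [x] is given by its coefficient sequence. *)
Definition fps := nat -> R.

Definition fps_one : fps := fun b => match b with O => 1 | S _ => 0 end.
Definition fps_add (f g : fps) : fps := fun b => f b + g b.
Definition fps_sub (f g : fps) : fps := fun b => f b - g b.
Definition fps_scal (c : R) (f : fps) : fps := fun b => c * f b.
Definition fps_sum {A} (G : A -> fps) (l : list A) : fps := fun b => lsum (fun x => G x b) l.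

(* [mul_lin c f] is [(c - x) f] and [div_lin c f] is [f / (c - x)]. *)
Definition mul_lin (c : R) (f : fps) : fps :=
  fun b => c * f b - match b with O => 0 | S b' => f b' end.
Definition div_lin (c : R) (f : fps) : fps :=
  fun b => lsum (fun a => / c ^ S a * f (b - a)%nat) (seq 0 (S b)).

Lemma div_lin_0 c f : div_lin c f 0%nat = / c * f 0%nat.
Proof. unfold div_lin. cbn -[Rinv]. rewrite Rmult_1_r. ring. Qed.

Lemma div_lin_S c f b : div_lin c f (S b) = / c * (f (S b) + div_lin c f b).
Proof.
  unfold div_lin at 1. change (seq 0 (S (S b))) with (0%nat :: seq 1 (S b)).
  rewrite lsum_cons, lsum_seq_shift, Rmult_plus_distr_l, pow_1, Nat.sub_0_r. f_equal.
  unfold div_lin. rewrite <- lsum_scal_l. apply lsum_ext_in. intros a _.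
  rewrite Nat.sub_succ. cbn [pow]. rewrite Rinv_mult. ring.
Qed.

Section LinearFactors.

Variable c : R.
Hypothesis c_neq0 : c <> 0.

Lemma mul_lin_div_lin f : mul_lin c (div_lin c f) = f.
Proof.
  extensionality b. unfold mul_lin. destruct b.
  - rewrite div_lin_0. field. exact c_neq0.
  - rewrite div_lin_S. field. exact c_neq0.
Qed.

Lemma div_lin_mul_lin f : div_lin c (mul_lin c f) = f.
Proof.
  extensionality b. induction b as [|b IH].
  - rewrite div_lin_0. unfold mul_lin. field. exact c_neq0.
  - rewrite div_lin_S, IH. unfold mul_lin. field. exact c_neq0.
Qed.

Lemma mul_lin_inj f g : mul_lin c f = mul_lin c g -> f = g.
Proof. intros H. rewrite <- (div_lin_mul_lin f), <- (div_lin_mul_lin g), H. reflexivity. Qed.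

Lemma mul_lin_comm d f : mul_lin d (mul_lin c f) = mul_lin c (mul_lin d f).
Proof. extensionality b. unfold mul_lin. destruct b as [|[|b]]; ring. Qed.

Lemma mul_lin_div_lin_comm d f : mul_lin d (div_lin c f) = div_lin c (mul_lin d f).
Proof.
  apply mul_lin_inj. rewrite <- mul_lin_comm, !mul_lin_div_lin. reflexivity.
Qed.

End LinearFactors.

Lemma mul_lin_sub c f g : mul_lin c (fps_sub f g) = fps_sub (mul_lin c f) (mul_lin c g).
Proof. extensionality b. unfold mul_lin, fps_sub. destruct b; ring. Qed.

Lemma mul_lin_scal c s f : mul_lin c (fps_scal s f) = fps_scal s (mul_lin c f).
Proof. extensionality b. unfold mul_lin, fps_scal. destruct b; ring. Qed.

Lemma mul_lin_plus_const c d f : mul_lin (c + d) f = fps_add (mul_lin c f) (fps_scal d f).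
Proof. extensionality b. unfold mul_lin, fps_add, fps_scal. destruct b; ring. Qed.

Lemma div_lin_add c f g : div_lin c (fps_add f g) = fps_add (div_lin c f) (div_lin c g).
Proof.
  extensionality b. unfold div_lin, fps_add. rewrite <- lsum_add.
  apply lsum_ext_in; intros; ring.
Qed.

Lemma div_lin_sub c f g : div_lin c (fps_sub f g) = fps_sub (div_lin c f) (div_lin c g).
Proof.
  extensionality b. unfold div_lin, fps_sub. rewrite <- lsum_sub.
  apply lsum_ext_in; intros; ring.
Qed.

Lemma div_lin_scal c s f : div_lin c (fps_scal s f) = fps_scal s (div_lin c f).
Proof.
  extensionality b. unfold div_lin, fps_scal. rewrite <- lsum_scal_l.
  apply lsum_ext_in; intros; ring.
Qed.

Lemma div_lin_sum {A} c (G : A -> fps) l :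
  div_lin c (fps_sum G l) = fps_sum (fun x => div_lin c (G x)) l.
Proof.
  extensionality b. unfold div_lin, fps_sum.
  rewrite (lsum_comm (fun x a => / c ^ S a * G x (b - a)%nat)).
  apply lsum_ext_in; intros. symmetry. apply lsum_scal_l.
Qed.

Lemma fps_sum_ext {A} (G H : A -> fps) l :
  (forall x, In x l -> G x = H x) -> fps_sum G l = fps_sum H l.
Proof.
  intros E. extensionality b. unfold fps_sum. apply lsum_ext_in. intros x Hx. rewrite E; auto.
Qed.

Lemma fps_sum_add {A} (G H : A -> fps) l :
  fps_sum (fun x => fps_add (G x) (H x)) l = fps_add (fps_sum G l) (fps_sum H l).
Proof. extensionality b. apply lsum_add. Qed.

Lemma fps_sum_sub {A} (G H : A -> fps) l :
  fps_sum (fun x => fps_sub (G x) (H x)) l = fps_sub (fps_sum G l) (fps_sum H l).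
Proof. extensionality b. apply lsum_sub. Qed.

Lemma fps_sum_scal {A} s (G : A -> fps) l :
  fps_sum (fun x => fps_scal s (G x)) l = fps_scal s (fps_sum G l).
Proof. extensionality b. apply lsum_scal_l. Qed.

Lemma fps_sum_comm {A B} (G : A -> B -> fps) l1 l2 :
  fps_sum (fun x => fps_sum (fun y => G x y) l2) l1 =
  fps_sum (fun y => fps_sum (fun x => G x y) l1) l2.
Proof. extensionality b. apply lsum_comm. Qed.

Lemma div_lin_one c b : div_lin c fps_one b = / c ^ S b.
Proof.
  induction b as [|b IH].
  - rewrite div_lin_0. cbn -[Rinv]. rewrite !Rmult_1_r. reflexivity.
  - rewrite div_lin_S, IH. cbn [fps_one]. rewrite Rplus_0_l, <- Rinv_mult. reflexivity.
Qed.

Lemma div_lin_div_lin_one c b : c <> 0 ->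
  div_lin c (div_lin c fps_one) b = INR (S b) / c ^ S (S b).
Proof.
  intros Hc. induction b as [|b IH].
  - rewrite div_lin_0, div_lin_one. cbn -[Rinv]. field. exact Hc.
  - rewrite div_lin_S, IH, div_lin_one, (S_INR (S b)).
    assert (Hp : c ^ S (S b) <> 0) by (apply pow_nonzero, Hc).
    change (c ^ S (S (S b))) with (c * c ^ S (S b)). field. split; assumption.
Qed.

Definition fps_nonneg (f : fps) := forall b, 0 <= f b.
Definition fps_le (f g : fps) := forall b, f b <= g b.

Lemma fps_one_nonneg : fps_nonneg fps_one.
Proof. intros [|b]; cbn; lra. Qed.

Lemma fps_scal_nonneg s f : 0 <= s -> fps_nonneg f -> fps_nonneg (fps_scal s f).
Proof. intros Hs Hf b. apply Rmult_le_pos; auto. Qed.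

Lemma fps_sum_nonneg {A} (G : A -> fps) l :
  (forall x, In x l -> fps_nonneg (G x)) -> fps_nonneg (fps_sum G l).
Proof. intros H b. apply lsum_nonneg. intros x Hx; apply H; auto. Qed.

Lemma div_lin_nonneg c f : 0 < c -> fps_nonneg f -> fps_nonneg (div_lin c f).
Proof.
  intros Hc Hf b. apply lsum_nonneg. intros a _.
  apply Rmult_le_pos; [left; apply Rinv_0_lt_compat, pow_lt, Hc|apply Hf].
Qed.

Lemma div_lin_le c c' f g : 0 < c -> c <= c' -> fps_nonneg f -> fps_le f g ->
  fps_le (div_lin c' f) (div_lin c g).
Proof.
  intros Hc Hcc Hf Hfg b. apply lsum_le. intros a _.
  apply Rmult_le_compat; auto.
  - left; apply Rinv_0_lt_compat, pow_lt; lra.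
  - apply Rinv_le_contravar; [apply pow_lt, Hc|apply pow_incr; lra].
Qed.

Definition coef_sum (f : fps) (b : nat) := lsum f (seq 0 (S b)).

Lemma coef_sum_nonneg f b : fps_nonneg f -> 0 <= coef_sum f b.
Proof. intros H. apply lsum_nonneg. intros; apply H. Qed.

Lemma coef_le_coef_sum f b a : fps_nonneg f -> (a <= b)%nat -> f a <= coef_sum f b.
Proof. intros H Ha. apply lsum_ge_term; [intros; apply H|apply in_seq; lia]. Qed.

Lemma coef_sum_le f g b : fps_le f g -> coef_sum f b <= coef_sum g b.
Proof. intros H. apply lsum_le. intros; apply H. Qed.

Lemma coef_sum_scal s f b : coef_sum (fps_scal s f) b = s * coef_sum f b.
Proof. apply lsum_scal_l. Qed.

Lemma coef_sum_sum {A} (G : A -> fps) l b :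
  coef_sum (fps_sum G l) b = lsum (fun x => coef_sum (G x) b) l.
Proof. apply lsum_comm. Qed.

Lemma coef_sum_div_lin c f b : 1 <= c -> fps_nonneg f ->
  coef_sum (div_lin c f) b <= INR (S b) * INR (S b) / c * coef_sum f b.
Proof.
  intros Hc Hf.
  assert (Hcoef : forall a, (a <= b)%nat -> div_lin c f a <= INR (S b) / c * coef_sum f b).
  { intros a Ha.
    apply Rle_trans with (lsum (fun _ => / c * coef_sum f b) (seq 0 (S a))).
    - apply lsum_le. intros i Hi. apply in_seq in Hi.
      apply Rmult_le_compat; [left; apply Rinv_0_lt_compat, pow_lt; lra|apply Hf| |].
      + apply Rinv_le_contravar; [lra|]. rewrite <- (pow_1 c) at 1. apply Rle_pow; [lra|lia].
      + apply coef_le_coef_sum; [exact Hf|lia].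
    - rewrite lsum_const, length_seq. unfold Rdiv. rewrite Rmult_assoc.
      apply Rmult_le_compat_r; [|apply le_INR; lia].
      apply Rmult_le_pos; [left; apply Rinv_0_lt_compat; lra|apply coef_sum_nonneg, Hf]. }
  apply Rle_trans with (lsum (fun _ => INR (S b) / c * coef_sum f b) (seq 0 (S b))).
  - apply lsum_le. intros a Ha. apply in_seq in Ha. apply Hcoef. lia.
  - rewrite lsum_const, length_seq. right. unfold Rdiv. ring.
Qed.

(** * The products [prod_(i=1..m) i / (l + i - x)] *)

Fixpoint frac_prod (m l : nat) : fps :=
  match m with
  | O => fps_one
  | S m' => fps_scal (INR (S m')) (div_lin (INR (l + S m')) (frac_prod m' l))
  end.

Lemma frac_prod_nonneg m l : fps_nonneg (frac_prod m l).
Proof.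
  induction m as [|m IH]; cbn [frac_prod]; [apply fps_one_nonneg|].
  apply fps_scal_nonneg; [apply pos_INR|].
  apply div_lin_nonneg; [apply lt_0_INR; lia|exact IH].
Qed.

Lemma mul_lin_frac_prod m l :
  mul_lin (INR (l + S m)) (frac_prod (S m) l) = fps_scal (INR (S m)) (frac_prod m l).
Proof.
  cbn [frac_prod]. rewrite mul_lin_scal, mul_lin_div_lin by (apply not_0_INR; lia).
  reflexivity.
Qed.

Lemma frac_prod_shift m l :
  mul_lin (INR (S l)) (frac_prod m l) = mul_lin (INR (S l + m)) (frac_prod m (S l)).
Proof.
  induction m as [|m IH]; [rewrite Nat.add_0_r; reflexivity|].
  rewrite mul_lin_frac_prod. cbn [frac_prod].
  rewrite mul_lin_scal, mul_lin_div_lin_comm, IH by (apply not_0_INR; lia).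
  replace (S l + m)%nat with (l + S m)%nat by lia.
  rewrite div_lin_mul_lin by (apply not_0_INR; lia). reflexivity.
Qed.

Lemma frac_prod_diff_l m l :
  fps_scal (INR m) (div_lin (INR (S l)) (frac_prod m (S l))) =
  fps_sub (frac_prod m l) (frac_prod m (S l)).
Proof.
  assert (Hl : INR (S l) <> 0) by (apply not_0_INR; lia).
  apply (mul_lin_inj _ Hl).
  rewrite mul_lin_scal, mul_lin_div_lin, mul_lin_sub, frac_prod_shift by exact Hl.
  rewrite plus_INR, mul_lin_plus_const.
  extensionality b. unfold fps_sub, fps_add, fps_scal. ring.
Qed.

Lemma frac_prod_diff_m m l : (1 <= l)%nat ->
  fps_scal (/ INR (S m)) (frac_prod (S m) l) =
  div_lin (INR l) (fps_sub (frac_prod m l) (frac_prod (S m) l)).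
Proof.
  intros Hl. assert (Hl0 : INR l <> 0) by (apply not_0_INR; lia).
  assert (Hm0 : INR (S m) <> 0) by (apply not_0_INR; lia).
  apply (mul_lin_inj _ Hl0). rewrite mul_lin_div_lin, mul_lin_scal by exact Hl0.
  pose proof (mul_lin_frac_prod m l) as E. rewrite plus_INR, mul_lin_plus_const in E.
  extensionality b. apply (f_equal (fun f => f b)) in E. unfold fps_add, fps_scal in E.
  unfold fps_scal, fps_sub. apply (Rmult_eq_reg_l (INR (S m))); [|exact Hm0].
  rewrite <- Rmult_assoc, Rinv_r, Rmult_1_l by exact Hm0. lra.
Qed.

Lemma frac_prod_0_recurrence m b :
  frac_prod (S m) 0 b =
  frac_prod m 0 b + / INR (S m) * match b with O => 0 | S b' => frac_prod (S m) 0 b' end.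
Proof.
  pose proof (f_equal (fun f => f b) (mul_lin_frac_prod m 0)) as E.
  rewrite Nat.add_0_l in E. unfold mul_lin, fps_scal in E.
  assert (Hm0 : INR (S m) <> 0) by (apply not_0_INR; lia).
  apply (Rmult_eq_reg_l (INR (S m))); [|exact Hm0].
  rewrite Rmult_plus_distr_l, <- Rmult_assoc, Rinv_r, Rmult_1_l by exact Hm0. lra.
Qed.

Lemma frac_prod_0_coef b m : frac_prod m 0 b = mzsv_trunc m (repeat 1%nat b).
Proof.
  revert m. induction b as [|b IHb]; intros m;
    (induction m as [|m IHm]; [reflexivity|]); rewrite frac_prod_0_recurrence, IHm.
  - cbn [repeat mzsv_trunc]. ring.
  - rewrite IHb. cbn [repeat mzsv_trunc]. rewrite lsum_seq_snoc, pow_1. reflexivity.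
Qed.

Lemma frac_prod_telescope_l m l N : (1 <= m)%nat -> (l <= N)%nat ->
  fps_scal (/ INR m) (frac_prod m l) =
  fps_add (fps_sum (fun l' => div_lin (INR l') (frac_prod m l')) (seq (S l) (N - l)))
          (fps_scal (/ INR m) (frac_prod m N)).
Proof.
  intros Hm HlN. assert (Hm0 : INR m <> 0) by (apply not_0_INR; lia).
  extensionality b. unfold fps_scal, fps_add, fps_sum.
  rewrite (lsum_ext_in _ (fun i => / INR m * (frac_prod m (i - 1) b - frac_prod m i b))).
  - rewrite lsum_scal_l, (lsum_telescope (fun i => frac_prod m i b)).
    replace (l + (N - l))%nat with N by lia. ring.
  - intros i Hi. apply in_seq in Hi. pose proof (frac_prod_diff_l m (i - 1)) as E.
    replace (S (i - 1)) with i in E by lia. apply (f_equal (fun f => f b)) in E.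
    unfold fps_scal, fps_sub in E. rewrite <- E. field. exact Hm0.
Qed.

Lemma frac_prod_telescope_m l N : (1 <= l)%nat ->
  fps_sum (fun m => fps_scal (/ INR m) (frac_prod m l)) (seq 1 N) =
  fps_sub (div_lin (INR l) fps_one) (div_lin (INR l) (frac_prod N l)).
Proof.
  intros Hl. extensionality b. unfold fps_sum, fps_sub.
  rewrite (lsum_ext_in _ (fun i => div_lin (INR l) (frac_prod (i - 1) l) b -
                                   div_lin (INR l) (frac_prod i l) b)).
  - apply (lsum_telescope (fun i => div_lin (INR l) (frac_prod i l) b) 0 N).
  - intros [|m] Hm; [apply in_seq in Hm; lia|].
    rewrite frac_prod_diff_m, div_lin_sub by exact Hl.
    replace (S m - 1)%nat with m by lia. reflexivity.
Qed.

(** * Nested sums *)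

(* [nested j l0 U f] is the sum over [l0 < l_1 < ... < l_j <= U] of
   [f l_j / ((l_1 - x) ... (l_j - x))]. *)
Fixpoint nested (j l0 U : nat) (f : nat -> fps) : fps :=
  match j with
  | O => f l0
  | S j' => fps_sum (fun l => div_lin (INR l) (nested j' l U f)) (seq (S l0) (U - l0))
  end.

Lemma nested_ext j l0 U f g : (forall l, (l0 <= l <= U)%nat -> f l = g l) ->
  (l0 <= U)%nat -> nested j l0 U f = nested j l0 U g.
Proof.
  revert l0. induction j as [|j IH]; intros l0 Hfg HU; cbn [nested].
  - apply Hfg; lia.
  - apply fps_sum_ext. intros l Hl. apply in_seq in Hl.
    rewrite (IH l); [reflexivity| |lia]. intros; apply Hfg; lia.
Qed.

Lemma nested_S_ext j l0 U f g : (forall l, (l0 < l <= U)%nat -> f l = g l) ->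
  nested (S j) l0 U f = nested (S j) l0 U g.
Proof.
  intros Hfg. cbn [nested]. apply fps_sum_ext. intros l Hl. apply in_seq in Hl.
  rewrite (nested_ext j l U f g); [reflexivity| |lia]. intros; apply Hfg; lia.
Qed.

Lemma nested_add j l0 U f g :
  nested j l0 U (fun l => fps_add (f l) (g l)) = fps_add (nested j l0 U f) (nested j l0 U g).
Proof.
  revert l0. induction j as [|j IH]; intros l0; [reflexivity|]. cbn [nested].
  rewrite <- fps_sum_add. apply fps_sum_ext. intros. rewrite IH, div_lin_add. reflexivity.
Qed.

Lemma nested_sub j l0 U f g :
  nested j l0 U (fun l => fps_sub (f l) (g l)) = fps_sub (nested j l0 U f) (nested j l0 U g).
Proof.
  revert l0. induction j as [|j IH]; intros l0; [reflexivity|]. cbn [nested].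
  rewrite <- fps_sum_sub. apply fps_sum_ext. intros. rewrite IH, div_lin_sub. reflexivity.
Qed.

Lemma nested_scal j l0 U s f :
  nested j l0 U (fun l => fps_scal s (f l)) = fps_scal s (nested j l0 U f).
Proof.
  revert l0. induction j as [|j IH]; intros l0; [reflexivity|]. cbn [nested].
  rewrite <- fps_sum_scal. apply fps_sum_ext. intros. rewrite IH, div_lin_scal. reflexivity.
Qed.

Lemma nested_sum {A} j l0 U (G : A -> nat -> fps) xs :
  nested j l0 U (fun l => fps_sum (fun x => G x l) xs) = fps_sum (fun x => nested j l0 U (G x)) xs.
Proof.
  revert l0. induction j as [|j IH]; intros l0; [reflexivity|]. cbn [nested].
  rewrite <- fps_sum_comm. apply fps_sum_ext. intros. rewrite IH, div_lin_sum. reflexivity.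
Qed.

Lemma nested_succ_inner j l0 U g :
  nested j l0 U (fun l => fps_sum (fun l' => div_lin (INR l') (g l')) (seq (S l) (U - l))) =
  nested (S j) l0 U g.
Proof.
  revert l0. induction j as [|j IH]; intros l0; [reflexivity|].
  cbn [nested]. apply fps_sum_ext. intros. rewrite IH. reflexivity.
Qed.

Lemma nested_nonneg j l0 U f : (forall l, (l0 <= l)%nat -> fps_nonneg (f l)) ->
  fps_nonneg (nested j l0 U f).
Proof.
  revert l0. induction j as [|j IH]; intros l0 Hf; cbn [nested]; [apply Hf; lia|].
  apply fps_sum_nonneg. intros l Hl. apply in_seq in Hl.
  apply div_lin_nonneg; [apply lt_0_INR; lia|]. apply IH. intros; apply Hf; lia.
Qed.

Lemma nested_S_nonneg j l0 U f : (forall l, (l0 < l)%nat -> fps_nonneg (f l)) ->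
  fps_nonneg (nested (S j) l0 U f).
Proof.
  intros Hf. cbn [nested]. apply fps_sum_nonneg. intros l Hl. apply in_seq in Hl.
  apply div_lin_nonneg; [apply lt_0_INR; lia|]. apply nested_nonneg. intros; apply Hf; lia.
Qed.

Lemma nested_le j l0 U f g : (forall l, (l0 <= l)%nat -> fps_nonneg (f l)) ->
  (forall l, (l0 <= l)%nat -> fps_le (f l) (g l)) -> fps_le (nested j l0 U f) (nested j l0 U g).
Proof.
  revert l0. induction j as [|j IH]; intros l0 Hf Hfg; cbn [nested]; [apply Hfg; lia|].
  intros b. apply lsum_le. intros l Hl. apply in_seq in Hl.
  apply div_lin_le; [apply lt_0_INR; lia|lra| |].
  - apply nested_nonneg. intros; apply Hf; lia.
  - apply IH; intros; [apply Hf|apply Hfg]; lia.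
Qed.

Lemma nested_S_le j l0 U f g : (forall l, (l0 < l)%nat -> fps_nonneg (f l)) ->
  (forall l, (l0 < l)%nat -> fps_le (f l) (g l)) ->
  fps_le (nested (S j) l0 U f) (nested (S j) l0 U g).
Proof.
  intros Hf Hfg b. apply lsum_le. intros l Hl. apply in_seq in Hl.
  apply div_lin_le; [apply lt_0_INR; lia|lra| |].
  - apply nested_nonneg. intros; apply Hf; lia.
  - apply nested_le; intros; [apply Hf|apply Hfg]; lia.
Qed.

(** * An exact identity for the truncated sums *)

Definition telescoped (k N j : nat) : fps :=
  fps_sum (fun m => fps_scal (/ INR m ^ S (k - j)) (nested j 0 N (frac_prod m))) (seq 1 N).

Definition boundary (k N j : nat) : fps :=
  fps_sum (fun m => fps_scal (/ INR m ^ S (k - j)) (nested j 0 N (fun _ => frac_prod m N)))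
          (seq 1 N).

Definition main_series (k N : nat) : fps := nested k 0 N (fun l => div_lin (INR l) fps_one).

Definition tail_series (k N : nat) : fps :=
  nested k 0 N (fun l => div_lin (INR l) (frac_prod N l)).

Lemma mzsv_trunc_telescoped k N n :
  mzsv_trunc N (S k :: repeat 1%nat n) = telescoped k N 0 n.
Proof.
  unfold telescoped, fps_sum, fps_scal. cbn [mzsv_trunc nested]. rewrite Nat.sub_0_r.
  apply lsum_ext_in. intros m _. rewrite frac_prod_0_coef. reflexivity.
Qed.

Lemma telescoped_S k N j : (j < k)%nat ->
  telescoped k N j = fps_add (telescoped k N (S j)) (boundary k N j).
Proof.
  intros Hj. unfold telescoped, boundary. rewrite <- fps_sum_add. apply fps_sum_ext.
  intros m Hm. apply in_seq in Hm. assert (Hm0 : INR m <> 0) by (apply not_0_INR; lia).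
  assert (E : nested j 0 N (frac_prod m) =
              fps_scal (INR m) (nested j 0 N (fun l => fps_scal (/ INR m) (frac_prod m l)))).
  { rewrite nested_scal. extensionality b. unfold fps_scal. field. exact Hm0. }
  rewrite E, (nested_ext j 0 N _ (fun l =>
    fps_add (fps_sum (fun l' => div_lin (INR l') (frac_prod m l')) (seq (S l) (N - l)))
            (fps_scal (/ INR m) (frac_prod m N)))); [|intros; apply frac_prod_telescope_l; lia|lia].
  rewrite nested_add, nested_succ_inner, nested_scal.
  replace (S (k - S j)) with (k - j)%nat by lia.
  extensionality b. unfold fps_add, fps_scal. cbn [pow].
  assert (Hp : INR m ^ (k - j) <> 0) by (apply pow_nonzero, Hm0).
  set (p := INR m ^ (k - j)) in *. field. split; assumption.
Qed.

Lemma telescoped_decomp k N j : (j <= k)%nat ->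
  telescoped k N 0 = fps_add (telescoped k N j) (fps_sum (boundary k N) (seq 0 j)).
Proof.
  induction j as [|j IH]; intros Hj.
  - extensionality b. unfold fps_add, fps_sum. cbn [seq]. rewrite lsum_nil. ring.
  - rewrite IH, telescoped_S by lia. extensionality b. unfold fps_add, fps_sum.
    rewrite lsum_seq_snoc, Nat.add_0_l. ring.
Qed.

Lemma telescoped_last k N : (1 <= k)%nat ->
  telescoped k N k = fps_sub (main_series k N) (tail_series k N).
Proof.
  intros Hk. unfold telescoped, main_series, tail_series. rewrite Nat.sub_diag.
  rewrite (fps_sum_ext _ (fun m => nested k 0 N (fun l => fps_scal (/ INR m) (frac_prod m l))))
    by (intros; rewrite nested_scal, pow_1; reflexivity).
  rewrite <- (nested_sum k 0 N (fun m l => fps_scal (/ INR m) (frac_prod m l))), <- nested_sub.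
  destruct k as [|k]; [lia|]. apply nested_S_ext. intros l Hl.
  apply frac_prod_telescope_m. lia.
Qed.

Lemma mzsv_trunc_decomp k N n : (1 <= k)%nat ->
  mzsv_trunc N (S k :: repeat 1%nat n) =
  main_series k N n - tail_series k N n + lsum (fun j => boundary k N j n) (seq 0 k).
Proof.
  intros Hk. rewrite mzsv_trunc_telescoped, (telescoped_decomp k N k), telescoped_last by lia.
  reflexivity.
Qed.

(** * Weak compositions *)

Lemma lsum_weak_comps_S f k n : lsum f (weak_comps (S k) n) =
  lsum (fun a => lsum (fun a' => f (a :: a')) (weak_comps k (n - a))) (seq 0 (S n)).
Proof.
  cbn [weak_comps]. rewrite lsum_flat_map. apply lsum_ext_in. intros. apply lsum_map.
Qed.

Lemma lsum_weak_comps_0_tail (F : nat -> list nat -> R) n :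
  lsum (fun c => lsum (F c) (weak_comps 0 (n - c))) (seq 0 (S n)) = F n [].
Proof.
  rewrite lsum_seq_snoc, Nat.add_0_l, Nat.sub_diag.
  rewrite (lsum_ext_in _ (fun _ => 0)), lsum_const; [cbn; ring|].
  intros c Hc. apply in_seq in Hc. cbn [weak_comps].
  destruct (Nat.eqb_spec (n - c) 0); [lia|reflexivity].
Qed.

Lemma lsum_weak_comps_snoc k : forall f n, lsum f (weak_comps (S k) n) =
  lsum (fun c => lsum (fun a => f (a ++ [c])) (weak_comps k (n - c))) (seq 0 (S n)).
Proof.
  induction k as [|k IH]; intros f n; rewrite lsum_weak_comps_S.
  - rewrite (lsum_weak_comps_0_tail (fun c a => f (c :: a))),
      (lsum_weak_comps_0_tail (fun c a => f (a ++ [c]))).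
    reflexivity.
  - rewrite (lsum_ext_in _ (fun a => lsum (fun c => lsum (fun a' => f (a :: a' ++ [c]))
                 (weak_comps k (n - a - c))) (seq 0 (S (n - a)))))
      by (intros; apply (IH (fun a' => f (_ :: a')))).
    rewrite (lsum_triangle (fun a c => lsum (fun a' => f (a :: a' ++ [c]))
               (weak_comps k (n - a - c)))).
    apply lsum_ext_in. intros c _. rewrite lsum_weak_comps_S.
    apply lsum_ext_in. intros a _. replace (n - c - a)%nat with (n - a - c)%nat by lia.
    reflexivity.
Qed.

Lemma lsum_weak_comps_rev k : forall f n,
  lsum f (weak_comps k n) = lsum (fun a => f (rev a)) (weak_comps k n).
Proof.
  induction k as [|k IH]; intros f n; [cbn; destruct (Nat.eqb n 0); reflexivity|].
  rewrite (lsum_weak_comps_S (fun a => f (rev a))), lsum_weak_comps_snoc.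
  apply lsum_ext_in. intros c _. apply (IH (fun a => f (a ++ [c]))).
Qed.

(** * Multiple zeta sums in ascending order *)

(* [mzv_asc l0 U [s_1; ...; s_j]] is the sum over [l0 < l_1 < ... < l_j <= U] of
   [l_1^-s_1 ... l_j^-s_j]; [mzv_trunc] lists its exponents in the opposite order. *)
Fixpoint mzv_asc (l0 U : nat) (ks : list nat) : R :=
  match ks with
  | [] => 1
  | s :: ks' => lsum (fun l => / INR l ^ s * mzv_asc l U ks') (seq (S l0) (U - l0))
  end.

Lemma mzv_asc_snoc s U xs : forall l0, mzv_asc l0 U (xs ++ [s]) =
  lsum (fun p => / INR p ^ s * mzv_asc l0 (p - 1) xs) (seq (S l0) (U - l0)).
Proof.
  induction xs as [|x xs IH]; intros l0; [cbn; reflexivity|].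
  cbn [app mzv_asc].
  rewrite (lsum_ext_in _ (fun l => lsum (fun p => / INR l ^ x * (/ INR p ^ s * mzv_asc l (p - 1) xs))
                                     (seq (S l) (U - l))))
    by (intros; rewrite IH, lsum_scal_l; reflexivity).
  rewrite lsum_strict_triangle. apply lsum_ext_in. intros p _. cbn [mzv_asc].
  rewrite <- lsum_scal_l. apply lsum_ext_in. intros. ring.
Qed.

Lemma mzv_trunc_asc ks : forall U, mzv_trunc U ks = mzv_asc 0 U (rev ks).
Proof.
  induction ks as [|s ks IH]; intros U; [reflexivity|].
  cbn [rev mzv_trunc]. rewrite mzv_asc_snoc, Nat.sub_0_r.
  apply lsum_ext_in. intros p _. rewrite IH. reflexivity.
Qed.

Lemma nested_double_pole_coef j : forall l0 U b,
  nested (S j) l0 U (fun l => div_lin (INR l) fps_one) b =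
  lsum (fun c => lsum (fun a => INR (S c) * mzv_asc l0 U (map S a ++ [S (S c)]))
                      (weak_comps j (b - c)))
       (seq 0 (S b)).
Proof.
  induction j as [|j IH]; intros l0 U b.
  - rewrite (lsum_weak_comps_0_tail (fun c a => INR (S c) * mzv_asc l0 U (map S a ++ _))).
    cbn [nested map app mzv_asc]. unfold fps_sum. rewrite <- lsum_scal_l.
    apply lsum_ext_in. intros l Hl. apply in_seq in Hl.
    rewrite div_lin_div_lin_one by (apply not_0_INR; lia). unfold Rdiv. ring.
  - change (nested (S (S j)) l0 U ?g) with
      (fps_sum (fun l => div_lin (INR l) (nested (S j) l U g)) (seq (S l0) (U - l0))).
    unfold fps_sum, div_lin. rewrite lsum_comm.
    rewrite (lsum_ext_in _ (fun a0 => lsum (fun c =>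
        lsum (fun a => lsum (fun l => / INR l ^ S a0 * (INR (S c) * mzv_asc l U (map S a ++ [S (S c)])))
                           (seq (S l0) (U - l0)))
             (weak_comps j (b - a0 - c))) (seq 0 (S (b - a0))))).
    2:{ intros a0 _. rewrite (lsum_ext_in _ (fun l => lsum (fun c => lsum (fun a =>
          / INR l ^ S a0 * (INR (S c) * mzv_asc l U (map S a ++ [S (S c)])))
          (weak_comps j (b - a0 - c))) (seq 0 (S (b - a0))))).
        - rewrite lsum_comm. apply lsum_ext_in. intros c _. apply lsum_comm.
        - intros l _. rewrite IH, <- lsum_scal_l. apply lsum_ext_in. intros c _.
          symmetry. apply lsum_scal_l. }
    rewrite (lsum_triangle (fun a0 c => lsum (fun a => lsum (fun l =>
        / INR l ^ S a0 * (INR (S c) * mzv_asc l U (map S a ++ [S (S c)]))) (seq (S l0) (U - l0)))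
        (weak_comps j (b - a0 - c)))).
    apply lsum_ext_in. intros c _. rewrite lsum_weak_comps_S.
    apply lsum_ext_in. intros a0 _. replace (b - a0 - c)%nat with (b - c - a0)%nat by lia.
    apply lsum_ext_in. intros a _. cbn [map app mzv_asc]. rewrite <- lsum_scal_l.
    apply lsum_ext_in. intros. ring.
Qed.

Lemma main_series_coef k N n : (1 <= k)%nat ->
  main_series k N n =
  lsum (fun a => INR (last a 0%nat + 1) * mzv_trunc N ((last a 0%nat + 2)%nat :: map S (removelast a)))
       (weak_comps k n).
Proof.
  intros Hk. destruct k as [|k]; [lia|].
  unfold main_series. rewrite nested_double_pole_coef, lsum_weak_comps_snoc.
  apply lsum_ext_in. intros c _. rewrite lsum_weak_comps_rev.
  apply lsum_ext_in. intros a _.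
  rewrite last_last, removelast_last, mzv_trunc_asc. cbn [rev].
  rewrite <- map_rev, Nat.add_1_r, Nat.add_succ_r, Nat.add_1_r. reflexivity.
Qed.

(** * Harmonic numbers *)

Definition harm (U : nat) : R := lsum (fun l => / INR l) (seq 1 U).

Lemma harm_S U : harm (S U) = harm U + / INR (S U).
Proof. unfold harm. rewrite lsum_seq_snoc. reflexivity. Qed.

Lemma harm_nonneg U : 0 <= harm U.
Proof.
  apply lsum_nonneg. intros l Hl. apply in_seq in Hl.
  left; apply Rinv_0_lt_compat, lt_0_INR; lia.
Qed.

Lemma harm_le a b : (a <= b)%nat -> harm a <= harm b.
Proof.
  induction 1 as [|b _ IH]; [lra|]. rewrite harm_S.
  assert (0 < / INR (S b)) by (apply Rinv_0_lt_compat, lt_0_INR; lia). lra.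
Qed.

Lemma harm_ge_1 m : (1 <= m)%nat -> 1 <= harm m.
Proof. intros Hm. apply Rle_trans with (harm 1); [cbn; lra|apply harm_le, Hm]. Qed.

Lemma lsum_inv_le_harm l0 U : lsum (fun l => / INR l) (seq (S l0) (U - l0)) <= harm U.
Proof.
  destruct (le_lt_dec l0 U) as [Hle|Hlt].
  - unfold harm. replace U with (l0 + (U - l0))%nat at 2 by lia.
    rewrite seq_app, lsum_app. replace (1 + l0)%nat with (S l0) by lia.
    pose proof (harm_nonneg l0). unfold harm in *. lra.
  - replace (U - l0)%nat with 0%nat by lia. apply harm_nonneg.
Qed.

Lemma harm_le_1_ln m : (1 <= m)%nat -> harm m <= 1 + ln (INR m).
Proof.
  induction m as [|m IH]; intros Hm; [lia|]. destruct m as [|m].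
  - cbn. rewrite ln_1. lra.
  - rewrite harm_S. specialize (IH ltac:(lia)).
    assert (Hp : 0 < INR (S m)) by (apply lt_0_INR; lia).
    assert (Hq : 0 < INR (S (S m))) by (apply lt_0_INR; lia).
    (* [ln y <= y - 1] at [y = (m + 1) / (m + 2)] *)
    pose proof (exp_ineq1_le (ln (INR (S m) / INR (S (S m))))) as E.
    rewrite exp_ln, ln_div in E by (try apply Rdiv_lt_0_compat; assumption).
    assert (INR (S m) / INR (S (S m)) = 1 - / INR (S (S m))) by
      (rewrite (S_INR (S m)); field; lra).
    lra.
Qed.

Lemma exp_pow y r : exp y ^ r = exp (INR r * y).
Proof.
  induction r as [|r IH]; [cbn; rewrite Rmult_0_l, exp_0; reflexivity|].
  rewrite <- tech_pow_Rmult, IH, <- exp_plus, S_INR. f_equal. ring.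
Qed.

Lemma harm_pow_le_sqrt r m : (1 <= m)%nat -> harm m ^ r <= (2 * INR r + 3) ^ r * sqrt (INR m).
Proof.
  intros Hm. pose proof (harm_le_1_ln m Hm) as Hln.
  set (L := ln (INR m)) in *. set (y := L / (2 * INR r + 2)).
  assert (Hm0 : 0 < INR m) by (apply lt_0_INR; lia).
  assert (HL : 0 <= L) by (rewrite <- ln_1; apply ln_le; [lra|apply (le_INR 1); lia]).
  assert (Hr : 0 <= INR r) by apply pos_INR.
  assert (Hy : 0 <= y) by (apply Rdiv_le_0_compat; lra).
  assert (Hharm : harm m <= (2 * INR r + 3) * exp y).
  { pose proof (exp_ineq1_le y).
    assert (EL : L = (2 * INR r + 2) * y) by (unfold y; field; lra).
    assert ((2 * INR r + 2) * (1 + y) <= (2 * INR r + 2) * exp y)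
      by (apply Rmult_le_compat_l; lra).
    lra. }
  assert (Hexp : exp y ^ r <= sqrt (INR m)).
  { assert (Ehalf : sqrt (INR m) = exp (L / 2)).
    { apply sqrt_lem_1; [lra|left; apply exp_pos|].
      rewrite <- exp_plus. replace (L / 2 + L / 2) with L by field. apply exp_ln, Hm0. }
    assert (Ey : (INR r + 1) * y = L / 2) by (unfold y; field; lra).
    assert (Hle : INR r * y <= L / 2) by lra.
    rewrite exp_pow, Ehalf. destruct (Rle_lt_or_eq_dec _ _ Hle) as [Hlt|Heq]; [|rewrite Heq; lra].
    left. apply exp_increasing, Hlt. }
  eapply Rle_trans; [apply pow_incr; split; [apply harm_nonneg|exact Hharm]|].
  rewrite Rpow_mult_distr. apply Rmult_le_compat_l; [apply pow_le; lra|exact Hexp].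
Qed.

Lemma coef_sum_nested_const j l0 U c b : fps_nonneg c ->
  coef_sum (nested j l0 U (fun _ => c)) b <= (INR (S b) * INR (S b) * harm U) ^ j * coef_sum c b.
Proof.
  intros Hc. revert l0. induction j as [|j IH]; intros l0; [cbn [nested pow]; lra|].
  set (X := INR (S b) * INR (S b)).
  assert (HX : 0 <= X) by (apply Rmult_le_pos; apply pos_INR).
  assert (Hrest : 0 <= (X * harm U) ^ j * coef_sum c b)
    by (apply Rmult_le_pos; [apply pow_le, Rmult_le_pos, harm_nonneg|apply coef_sum_nonneg]; assumption).
  cbn [nested]. rewrite coef_sum_sum.
  apply Rle_trans with (lsum (fun l => X * ((X * harm U) ^ j * coef_sum c b) * / INR l)
                             (seq (S l0) (U - l0))).
  - apply lsum_le. intros l Hl. apply in_seq in Hl.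
    eapply Rle_trans; [apply coef_sum_div_lin; [apply (le_INR 1); lia|]|].
    + apply nested_nonneg. intros; exact Hc.
    + fold X. unfold Rdiv.
      apply Rle_trans with (X * / INR l * ((X * harm U) ^ j * coef_sum c b)); [|right; ring].
      apply Rmult_le_compat_l; [|apply IH].
      apply Rmult_le_pos; [exact HX|left; apply Rinv_0_lt_compat, lt_0_INR; lia].
  - rewrite lsum_scal_l, <- tech_pow_Rmult.
    apply Rle_trans with (X * ((X * harm U) ^ j * coef_sum c b) * harm U);
      [apply Rmult_le_compat_l; [apply Rmult_le_pos; assumption|apply lsum_inv_le_harm]|].
    right. ring.
Qed.

Lemma lsum_inv_pow_sqrt_le N : lsum (fun m => / INR m ^ 2 * sqrt (INR m)) (seq 1 N) <= 3.
Proof.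
  assert (H : forall M, (1 <= M)%nat ->
            lsum (fun m => / INR m ^ 2 * sqrt (INR m)) (seq 1 M) + 2 / sqrt (INR M) <= 3).
  { induction 1 as [|M HM IH]; [cbn; rewrite sqrt_1; lra|].
    rewrite lsum_seq_snoc. replace (1 + M)%nat with (S M) by lia.
    set (a := sqrt (INR M)) in *. set (c := sqrt (INR (S M))).
    assert (Ha : 0 < a) by (apply sqrt_lt_R0, lt_0_INR; lia).
    assert (Hc : 0 < c) by (apply sqrt_lt_R0, lt_0_INR; lia).
    assert (Ea : a * a = INR M) by (apply sqrt_sqrt, pos_INR).
    assert (Ec : c * c = INR (S M)) by (apply sqrt_sqrt, pos_INR).
    assert (Eca : c * c = a * a + 1) by (rewrite Ea, Ec, S_INR; reflexivity).
    assert (Hac : a <= c) by nra.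
    (* [2 c^3 - 2 a c^2 - a = (c - a)^2 (2 c + a)] once [c^2 = a^2 + 1] *)
    assert (Key : a + 2 * a * (c * c) <= 2 * c * (c * c)).
    { assert (0 <= (c - a) * (c - a) * (2 * c + a)) by
        (apply Rmult_le_pos; [apply Rmult_le_pos|]; nra).
      nra. }
    assert (Hstep : / INR (S M) ^ 2 * c + 2 / c <= 2 / a).
    { rewrite <- Ec. apply Rmult_le_reg_r with (a * (c * (c * c))); [nra|].
      field_simplify; [nra|lra|lra]. }
    lra. }
  destruct N as [|N]; [cbn; lra|].
  specialize (H (S N) ltac:(lia)).
  assert (0 < 2 / sqrt (INR (S N)))
    by (apply Rdiv_lt_0_compat; [lra|apply sqrt_lt_R0, lt_0_INR; lia]).
  lra.
Qed.

Lemma lsum_inv_sq_harm_pow_le b N :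
  lsum (fun m => / INR m ^ 2 * harm m ^ b) (seq 1 N) <= (2 * INR b + 3) ^ b * 3.
Proof.
  apply Rle_trans with ((2 * INR b + 3) ^ b * lsum (fun m => / INR m ^ 2 * sqrt (INR m)) (seq 1 N)).
  - rewrite <- lsum_scal_l. apply lsum_le. intros m Hm. apply in_seq in Hm.
    assert (0 < / INR m ^ 2) by (apply Rinv_0_lt_compat, pow_lt, lt_0_INR; lia).
    pose proof (harm_pow_le_sqrt b m ltac:(lia)). nra.
  - apply Rmult_le_compat_l; [apply pow_le; pose proof (pos_INR b); lra|].
    apply lsum_inv_pow_sqrt_le.
Qed.

Lemma is_lim_seq_inv_sqrt : is_lim_seq (fun N => / sqrt (INR (S N))) 0.
Proof.
  replace (Finite 0) with (Rbar_inv p_infty) by reflexivity.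
  apply is_lim_seq_inv; [|discriminate].
  apply (is_lim_comp_seq sqrt (fun N => INR (S N)) p_infty p_infty).
  - apply (is_lim_sqrt_p (fun x => x)), is_lim_id.
  - exists 0%nat. intros. discriminate.
  - apply -> is_lim_seq_incr_1. exact is_lim_seq_INR.
Qed.

Lemma harm_pow_div_le r N :
  harm (S N) ^ r / INR (S N) <= (2 * INR r + 3) ^ r * / sqrt (INR (S N)).
Proof.
  pose proof (harm_pow_le_sqrt r (S N) ltac:(lia)) as H.
  set (s := sqrt (INR (S N))) in *.
  assert (Hs : 0 < s) by (apply sqrt_lt_R0, lt_0_INR; lia).
  assert (Es : s * s = INR (S N)) by (apply sqrt_sqrt, pos_INR).
  rewrite <- Es. apply Rle_trans with ((2 * INR r + 3) ^ r * s / (s * s)).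
  - apply Rmult_le_compat_r; [left; apply Rinv_0_lt_compat; nra|exact H].
  - right. field. lra.
Qed.

(** * Estimates for the remainder terms *)

Lemma pow_le_pow_compat x y i j : 0 <= x <= y -> 1 <= y -> (i <= j)%nat -> x ^ i <= y ^ j.
Proof.
  intros Hxy Hy Hij. apply Rle_trans with (y ^ i); [apply pow_incr, Hxy|apply Rle_pow; assumption].
Qed.

Lemma mzsv_trunc_nonneg ks m : 0 <= mzsv_trunc m ks.
Proof.
  revert m. induction ks as [|s ks IH]; intros m; cbn [mzsv_trunc]; [lra|].
  apply lsum_nonneg. intros j Hj. apply in_seq in Hj.
  apply Rmult_le_pos; [left; apply Rinv_0_lt_compat, pow_lt, lt_0_INR; lia|apply IH].
Qed.

Lemma mzsv_trunc_ones_le b m : mzsv_trunc m (repeat 1%nat b) <= harm m ^ b.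
Proof.
  revert m. induction b as [|b IH]; intros m; [cbn; lra|]. cbn [repeat mzsv_trunc].
  apply Rle_trans with (lsum (fun j => / INR j * harm m ^ b) (seq 1 m)).
  - apply lsum_le. intros j Hj. apply in_seq in Hj. rewrite pow_1.
    apply Rmult_le_compat_l; [left; apply Rinv_0_lt_compat, lt_0_INR; lia|].
    eapply Rle_trans; [apply IH|]. apply pow_incr. split; [apply harm_nonneg|apply harm_le; lia].
  - rewrite lsum_scal_r. right. reflexivity.
Qed.

Lemma mzsv_trunc_le k N b : (1 <= k)%nat ->
  mzsv_trunc N (S k :: repeat 1%nat b) <= (2 * INR b + 3) ^ b * 3.
Proof.
  intros Hk.
  eapply Rle_trans; [|apply (lsum_inv_sq_harm_pow_le b N)]. cbn [mzsv_trunc].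
  apply lsum_le. intros m Hm. apply in_seq in Hm.
  assert (Hm0 : 0 < INR m) by (apply lt_0_INR; lia).
  apply Rmult_le_compat; [left; apply Rinv_0_lt_compat, pow_lt, Hm0| |
                          |apply mzsv_trunc_ones_le].
  - apply mzsv_trunc_nonneg.
  - apply Rinv_le_contravar; [apply pow_lt, Hm0|apply Rle_pow; [apply (le_INR 1); lia|lia]].
Qed.

Lemma coef_sum_frac_prod_0 m b : (1 <= m)%nat ->
  coef_sum (frac_prod m 0) b <= INR (S b) * harm m ^ b.
Proof.
  intros Hm. apply Rle_trans with (lsum (fun _ => harm m ^ b) (seq 0 (S b))).
  - apply lsum_le. intros a Ha. apply in_seq in Ha. rewrite frac_prod_0_coef.
    eapply Rle_trans; [apply mzsv_trunc_ones_le|]. apply Rle_pow; [apply harm_ge_1, Hm|lia].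
  - rewrite lsum_const, length_seq. lra.
Qed.

Lemma frac_prod_le_0 m N :
  fps_le (frac_prod (S m) N) (fps_scal (/ INR (S N)) (frac_prod (S m) 0)).
Proof.
  induction m as [|m IH]; intros b; cbn [frac_prod]; unfold fps_scal.
  - rewrite !div_lin_one, Nat.add_1_r. change (INR (0 + 1)) with 1. rewrite pow1, Rinv_1.
    assert (HN : 1 <= INR (S N)) by (apply (le_INR 1); lia).
    rewrite !Rmult_1_l, Rmult_1_r. apply Rinv_le_contravar; [lra|].
    rewrite <- (pow_1 (INR (S N))) at 1. apply Rle_pow; [exact HN|lia].
  - pose proof (div_lin_le (INR (0 + S (S m))) (INR (N + S (S m))) _ _
                  ltac:(apply lt_0_INR; lia) ltac:(apply le_INR; lia)
                  (frac_prod_nonneg (S m) N) IH b) as E.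
    rewrite div_lin_scal in E. unfold fps_scal in E. cbn [frac_prod] in E |- *.
    rewrite <- Rmult_assoc, (Rmult_comm (/ _)), Rmult_assoc.
    apply Rmult_le_compat_l; [apply pos_INR|exact E].
Qed.

Lemma frac_prod_le_succ N l : (1 <= l)%nat ->
  fps_le (frac_prod N l) (fps_scal (/ INR (S N)) (frac_prod (S N) 0)).
Proof.
  intros Hl. induction N as [|N IH]; intros b.
  - change (fps_one b <= / INR 1 * (INR 1 * div_lin (INR (0 + 1)) fps_one b)).
    rewrite div_lin_one. change (INR (0 + 1)) with 1. change (INR 1) with 1.
    rewrite pow1, Rinv_1, !Rmult_1_l. destruct b; cbn; lra.
  - change (INR (S N) * div_lin (INR (l + S N)) (frac_prod N l) b <=
            / INR (S (S N)) * (INR (S (S N)) * div_lin (INR (0 + S (S N))) (frac_prod (S N) 0) b)).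
    assert (HN : 0 < INR (S N)) by (apply lt_0_INR; lia).
    assert (HSN : 0 < INR (S (S N))) by (apply lt_0_INR; lia).
    pose proof (div_lin_le (INR (0 + S (S N))) (INR (l + S N)) _ _
                  ltac:(apply lt_0_INR; lia) ltac:(apply le_INR; lia)
                  (frac_prod_nonneg N l) IH b) as E.
    rewrite div_lin_scal in E. unfold fps_scal in E.
    rewrite <- Rmult_assoc, Rinv_l, Rmult_1_l by lra.
    apply Rle_trans with (INR (S N) * (/ INR (S N) * div_lin (INR (0 + S (S N))) (frac_prod (S N) 0) b)).
    + apply Rmult_le_compat_l; [lra|exact E].
    + right. field. lra.
Qed.

Section Remainders.

Variables (b N : nat).

(* every remainder term is bounded by a constant times [X ^ (k + b) / (N + 1)] *)
Let X := INR (S b) * INR (S b) * harm (S N).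
Let C := (2 * INR b + 3) ^ b * 3.

Lemma growth_ge_1 : 1 <= X.
Proof.
  assert (Hb : 1 <= INR (S b)) by (apply (le_INR 1); lia).
  pose proof (harm_ge_1 (S N) ltac:(lia)). unfold X.
  replace 1 with (1 * 1 * 1) by ring. repeat apply Rmult_le_compat; lra.
Qed.

Lemma harm_le_growth : harm (S N) <= X.
Proof.
  assert (Hb : 1 <= INR (S b) * INR (S b)).
  { assert (1 <= INR (S b)) by (apply (le_INR 1); lia). nra. }
  unfold X. rewrite <- (Rmult_1_l (harm (S N))) at 1.
  apply Rmult_le_compat_r; [apply harm_nonneg|exact Hb].
Qed.

Lemma growth_pow_le h j k : (h <= S N)%nat -> (j <= k)%nat ->
  (INR (S b) * INR (S b) * harm h) ^ j <= X ^ k.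
Proof.
  intros Hh Hjk. apply pow_le_pow_compat; [|apply growth_ge_1|exact Hjk].
  split; [apply Rmult_le_pos; [apply Rmult_le_pos; apply pos_INR|apply harm_nonneg]|].
  apply Rmult_le_compat_l; [apply Rmult_le_pos; apply pos_INR|apply harm_le, Hh].
Qed.

Lemma boundary_coef_nonneg k j : 0 <= boundary k N j b.
Proof.
  apply lsum_nonneg. intros m Hm. apply in_seq in Hm.
  apply Rmult_le_pos; [left; apply Rinv_0_lt_compat, pow_lt, lt_0_INR; lia|].
  apply nested_nonneg. intros; apply frac_prod_nonneg.
Qed.

Lemma nested_frac_prod_const_coef_le j r m : (j <= r)%nat -> (1 <= m)%nat ->
  nested j 0 N (fun _ => frac_prod m N) b <= X ^ r * (INR (S b) * harm m ^ b / INR (S N)).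
Proof.
  intros Hjr Hm. destruct m as [|m]; [lia|].
  eapply Rle_trans.
  { apply (coef_le_coef_sum _ b); [|lia]. apply nested_nonneg. intros; apply frac_prod_nonneg. }
  eapply Rle_trans; [apply coef_sum_nested_const, frac_prod_nonneg|].
  apply Rmult_le_compat; [apply pow_le, Rmult_le_pos;
                            [apply Rmult_le_pos; apply pos_INR|apply harm_nonneg]
                         |apply coef_sum_nonneg, frac_prod_nonneg
                         |apply growth_pow_le; lia|].
  eapply Rle_trans; [apply coef_sum_le, frac_prod_le_0|]. rewrite coef_sum_scal.
  unfold Rdiv. rewrite Rmult_comm.
  apply Rmult_le_compat_r; [left; apply Rinv_0_lt_compat, lt_0_INR; lia|].
  apply coef_sum_frac_prod_0. lia.
Qed.

Lemma boundary_coef_le k j : (j < k)%nat ->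
  boundary k N j b <= INR (S b) * C * X ^ (k + b) / INR (S N).
Proof.
  intros Hjk.
  assert (HXp : 0 <= X ^ (k + b)) by (apply pow_le; pose proof growth_ge_1; lra).
  assert (HN : 0 < / INR (S N)) by (apply Rinv_0_lt_compat, lt_0_INR; lia).
  apply Rle_trans with (lsum (fun m => / INR m ^ 2 * harm m ^ b) (seq 1 N) *
                        (INR (S b) * X ^ (k + b) / INR (S N))).
  - unfold boundary, fps_sum, fps_scal. rewrite <- lsum_scal_r.
    apply lsum_le. intros m Hm. apply in_seq in Hm.
    assert (Hm0 : 0 < INR m) by (apply lt_0_INR; lia).
    apply Rle_trans with (/ INR m ^ 2 * (X ^ (k + b) * (INR (S b) * harm m ^ b / INR (S N)))).
    + apply Rmult_le_compat; [left; apply Rinv_0_lt_compat, pow_lt, Hm0| | |].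
      * apply nested_nonneg. intros; apply frac_prod_nonneg.
      * apply Rinv_le_contravar; [apply pow_lt, Hm0|].
        apply Rle_pow; [apply (le_INR 1); lia|lia].
      * apply nested_frac_prod_const_coef_le; lia.
    + right. unfold Rdiv. ring.
  - apply Rle_trans with (C * (INR (S b) * X ^ (k + b) / INR (S N))).
    + apply Rmult_le_compat_r; [|apply lsum_inv_sq_harm_pow_le].
      apply Rmult_le_pos; [apply Rmult_le_pos; [apply pos_INR|exact HXp]|lra].
    + right. unfold Rdiv. ring.
Qed.

Lemma tail_series_coef_nonneg k : (1 <= k)%nat -> 0 <= tail_series k N b.
Proof.
  intros Hk. destruct k as [|k]; [lia|]. apply nested_S_nonneg. intros l Hl.
  apply div_lin_nonneg; [apply lt_0_INR; lia|apply frac_prod_nonneg].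
Qed.

Lemma tail_series_coef_le k : (1 <= k)%nat ->
  tail_series k N b <= INR (S b) ^ 3 * X ^ (k + b) / INR (S N).
Proof.
  intros Hk. set (c := div_lin 1 (fps_scal (/ INR (S N)) (frac_prod (S N) 0))).
  assert (HN : 0 < / INR (S N)) by (apply Rinv_0_lt_compat, lt_0_INR; lia).
  assert (Hc : fps_nonneg c).
  { apply div_lin_nonneg; [lra|]. apply fps_scal_nonneg; [lra|apply frac_prod_nonneg]. }
  assert (Htail : tail_series k N b <= nested k 0 N (fun _ => c) b).
  { destruct k as [|k]; [lia|]. apply nested_S_le; intros l Hl.
    - apply div_lin_nonneg; [apply lt_0_INR; lia|apply frac_prod_nonneg].
    - apply div_lin_le; [lra|apply (le_INR 1); lia|apply frac_prod_nonneg|].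
      apply frac_prod_le_succ. lia. }
  assert (Hcsum : coef_sum c b <= INR (S b) * INR (S b) * (/ INR (S N) * (INR (S b) * X ^ b))).
  { eapply Rle_trans.
    { apply coef_sum_div_lin; [lra|]. apply fps_scal_nonneg; [lra|apply frac_prod_nonneg]. }
    rewrite coef_sum_scal, Rdiv_1_r. apply Rmult_le_compat_l; [apply Rmult_le_pos; apply pos_INR|].
    apply Rmult_le_compat_l; [lra|].
    eapply Rle_trans; [apply coef_sum_frac_prod_0; lia|].
    apply Rmult_le_compat_l; [apply pos_INR|].
    apply pow_incr. split; [apply harm_nonneg|apply harm_le_growth]. }
  eapply Rle_trans; [exact Htail|].
  eapply Rle_trans; [apply (coef_le_coef_sum _ b); [apply nested_nonneg; intros; exact Hc|lia]|].
  eapply Rle_trans; [apply coef_sum_nested_const, Hc|].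
  apply Rle_trans with (X ^ k * (INR (S b) * INR (S b) * (/ INR (S N) * (INR (S b) * X ^ b)))).
  - apply Rmult_le_compat; [|apply coef_sum_nonneg, Hc|apply growth_pow_le; lia|exact Hcsum].
    apply pow_le, Rmult_le_pos; [apply Rmult_le_pos; apply pos_INR|apply harm_nonneg].
  - right. rewrite pow_add. unfold Rdiv. ring.
Qed.

Lemma mzsv_trunc_sub_main_le k : (1 <= k)%nat ->
  Rabs (mzsv_trunc N (S k :: repeat 1%nat b) - main_series k N b) <=
  (INR (S b) ^ 3 + INR k * (INR (S b) * C)) * X ^ (k + b) / INR (S N).
Proof.
  intros Hk. rewrite mzsv_trunc_decomp by exact Hk.
  pose proof (tail_series_coef_nonneg k Hk). pose proof (tail_series_coef_le k Hk).
  assert (0 <= lsum (fun j => boundary k N j b) (seq 0 k))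
    by (apply lsum_nonneg; intros; apply boundary_coef_nonneg).
  assert (lsum (fun j => boundary k N j b) (seq 0 k) <= INR k * (INR (S b) * C * X ^ (k + b) / INR (S N))).
  { apply Rle_trans with (lsum (fun _ => INR (S b) * C * X ^ (k + b) / INR (S N)) (seq 0 k)).
    - apply lsum_le. intros j Hj. apply in_seq in Hj. apply boundary_coef_le. lia.
    - rewrite lsum_const, length_seq. lra. }
  apply Rabs_le. unfold Rdiv in *. split; nra.
Qed.

End Remainders.

(** * Passage to the limit *)

Lemma mzsv_trunc_sub_main_rate k b : (1 <= k)%nat -> exists K, 0 <= K /\ forall N,
  Rabs (mzsv_trunc N (S k :: repeat 1%nat b) - main_series k N b) <= K * / sqrt (INR (S N)).
Proof.
  intros Hk. set (u := INR (S b) * INR (S b)). set (r := (k + b)%nat).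
  set (A := INR (S b) ^ 3 + INR k * (INR (S b) * ((2 * INR b + 3) ^ b * 3))).
  assert (HA : 0 <= A).
  { pose proof (pos_INR b). pose proof (pos_INR k).
    assert (0 <= (2 * INR b + 3) ^ b) by (apply pow_le; lra).
    unfold A. apply Rplus_le_le_0_compat; [apply pow_le, pos_INR|].
    repeat apply Rmult_le_pos; try apply pos_INR; lra. }
  assert (Hu : 0 <= u ^ r) by (apply pow_le, Rmult_le_pos; apply pos_INR).
  exists (A * u ^ r * (2 * INR r + 3) ^ r). split.
  { apply Rmult_le_pos; [apply Rmult_le_pos; assumption|].
    apply pow_le. pose proof (pos_INR r). lra. }
  intros N. eapply Rle_trans; [apply mzsv_trunc_sub_main_le, Hk|]. fold u r.
  rewrite Rpow_mult_distr. unfold Rdiv. rewrite !Rmult_assoc.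
  apply Rmult_le_compat_l; [exact HA|]. apply Rmult_le_compat_l; [exact Hu|].
  apply harm_pow_div_le.
Qed.

Lemma mzv_trunc_nonneg ks m : 0 <= mzv_trunc m ks.
Proof.
  revert m. induction ks as [|s ks IH]; intros m; cbn [mzv_trunc]; [lra|].
  apply lsum_nonneg. intros j Hj. apply in_seq in Hj.
  apply Rmult_le_pos; [left; apply Rinv_0_lt_compat, pow_lt, lt_0_INR; lia|apply IH].
Qed.

Lemma mzv_trunc_le_succ ks N : mzv_trunc N ks <= mzv_trunc (S N) ks.
Proof.
  destruct ks as [|s ks]; cbn [mzv_trunc]; [lra|]. rewrite lsum_seq_snoc.
  assert (0 <= / INR (1 + N) ^ s * mzv_trunc (1 + N - 1) ks).
  { apply Rmult_le_pos; [left; apply Rinv_0_lt_compat, pow_lt, lt_0_INR; lia|].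
    apply mzv_trunc_nonneg. }
  lra.
Qed.

Lemma is_lim_seq_mzv_trunc ks M : (forall N, mzv_trunc N ks <= M) ->
  is_lim_seq (fun N => mzv_trunc N ks) (mzv ks).
Proof.
  intros HM. destruct (ex_finite_lim_seq_incr _ M (mzv_trunc_le_succ ks) HM) as [l Hl].
  unfold mzv. rewrite (is_lim_seq_unique _ _ Hl). exact Hl.
Qed.

Lemma is_lim_seq_main_series k b : (1 <= k)%nat ->
  is_lim_seq (fun N => main_series k N b)
    (lsum (fun a => INR (last a 0%nat + 1) * mzv ((last a 0%nat + 2)%nat :: map S (removelast a)))
          (weak_comps k b)).
Proof.
  intros Hk. destruct (mzsv_trunc_sub_main_rate k b Hk) as [K [HK Hrate]].
  set (T := fun a N => INR (last a 0%nat + 1) *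
                       mzv_trunc N ((last a 0%nat + 2)%nat :: map S (removelast a))).
  assert (Hbound : forall N, main_series k N b <= (2 * INR b + 3) ^ b * 3 + K).
  { intros N. specialize (Hrate N). apply Rabs_le_between' in Hrate.
    pose proof (mzsv_trunc_le k N b Hk).
    assert (K * / sqrt (INR (S N)) <= K).
    { rewrite <- (Rmult_1_r K) at 2. apply Rmult_le_compat_l; [exact HK|].
      rewrite <- Rinv_1. apply Rinv_le_contravar; [lra|].
      rewrite <- sqrt_1. apply sqrt_le_1_alt, (le_INR 1). lia. }
    lra. }
  apply (is_lim_seq_ext (fun N => lsum (fun a => T a N) (weak_comps k b)));
    [intros N; symmetry; apply main_series_coef, Hk|].
  apply is_lim_seq_lsum. intros a Ha.
  apply (is_lim_seq_scal_l _ (INR (last a 0%nat + 1)) (mzv _)), (is_lim_seq_mzv_trunc _ ((2 * INR b + 3) ^ b * 3 + K)).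
  intros N. eapply Rle_trans; [|apply (Hbound N)]. rewrite main_series_coef by exact Hk.
  eapply Rle_trans; [|apply (lsum_ge_term (fun a => T a N) _ a); [|exact Ha]].
  - unfold T. rewrite <- (Rmult_1_l (mzv_trunc N _)) at 1.
    apply Rmult_le_compat_r; [apply mzv_trunc_nonneg|apply (le_INR 1); lia].
  - intros y _. apply Rmult_le_pos; [apply pos_INR|apply mzv_trunc_nonneg].
Qed.

Lemma mzsv_eq_weighted_sum k n : (1 <= k)%nat ->
  mzsv (S k :: repeat 1%nat n) =
  lsum (fun a => INR (last a 0%nat + 1) * mzv ((last a 0%nat + 2)%nat :: map S (removelast a)))
       (weak_comps k n).
Proof.
  intros Hk. destruct (mzsv_trunc_sub_main_rate k n Hk) as [K [HK Hrate]].
  set (lim := lsum _ (weak_comps k n)).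
  assert (Herr : is_lim_seq (fun N => mzsv_trunc N (S k :: repeat 1%nat n) - main_series k N n) 0).
  { apply is_lim_seq_abs_0.
    apply (is_lim_seq_le_le (fun _ => 0) _ (fun N => K * / sqrt (INR (S N)))).
    - intros N. split; [apply Rabs_pos|apply Hrate].
    - apply is_lim_seq_const.
    - replace (Finite 0) with (Rbar_mult K 0) by (cbn; f_equal; ring).
      apply is_lim_seq_scal_l, is_lim_seq_inv_sqrt. }
  assert (Hlim : is_lim_seq (fun N => mzsv_trunc N (S k :: repeat 1%nat n)) (lim + 0)).
  { apply (is_lim_seq_ext (fun N => main_series k N n +
             (mzsv_trunc N (S k :: repeat 1%nat n) - main_series k N n))); [intros; ring|].
    apply is_lim_seq_plus'; [apply is_lim_seq_main_series, Hk|exact Herr]. }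
  unfold mzsv. rewrite (is_lim_seq_unique _ _ Hlim). cbn. ring.
Qed.

Lemma shifted_sum_eq_weighted_sum k n : (1 <= k)%nat ->
  lsum (fun t => lsum (fun a => mzv ((last a 0%nat + t + 1)%nat :: map S (removelast a)))
                      (weak_comps k (n + 1 - t))) (seq 1 (n + 1)) =
  lsum (fun a => INR (last a 0%nat + 1) * mzv ((last a 0%nat + 2)%nat :: map S (removelast a)))
       (weak_comps k n).
Proof.
  intros Hk. destruct k as [|k]; [lia|].
  set (G := fun d => lsum (fun a => mzv ((d + 2)%nat :: map S a)) (weak_comps k (n - d))).
  transitivity (lsum (fun d => INR (S d) * G d) (seq 0 (S n))).
  2:{ rewrite (lsum_weak_comps_snoc k _ n). apply lsum_ext_in. intros c _.
      unfold G. rewrite <- lsum_scal_l. apply lsum_ext_in. intros a _.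
      rewrite last_last, removelast_last, Nat.add_1_r. reflexivity. }
  rewrite <- lsum_tails. replace (n + 1)%nat with (S n) by lia. rewrite lsum_seq_shift.
  apply lsum_ext_in. intros t Ht. apply in_seq in Ht.
  rewrite lsum_weak_comps_snoc. replace (S n - S t)%nat with (n - t)%nat by lia.
  apply lsum_ext_in. intros c Hc. apply in_seq in Hc. unfold G.
  replace (n - (c + t))%nat with (n - t - c)%nat by lia.
  apply lsum_ext_in. intros a _. rewrite last_last, removelast_last.
  replace (c + S t + 1)%nat with (c + t + 2)%nat by lia. reflexivity.
Qed.

Theorem proposition2p5 (k n : nat) (hk : (1 <= k)%nat) (hn : (1 <= n)%nat) :
  mzsv (S k :: repeat 1%nat n) =
    lsum (fun t =>
      lsum (fun a => mzv ((last a 0%nat + t + 1)%nat :: map S (removelast a)))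
           (weak_comps k (n + 1 - t)))
      (seq 1 (n + 1))
  /\
  mzsv (S k :: repeat 1%nat n) =
    lsum (fun a => INR (last a 0%nat + 1) * mzv ((last a 0%nat + 2)%nat :: map S (removelast a)))
         (weak_comps k n).
Proof.
  rewrite shifted_sum_eq_weighted_sum by exact hk.
  split; apply mzsv_eq_weighted_sum, hk.
Qed.
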